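(* Let $\mathcal{M}$ be a monotone model of dimension $n$, $\mathbf{x}\in\{0,1\}^n$ an instance and $\delta\in(0,1]$. If $\mathbf{y}\subseteq\mathbf{x}$ is a $\delta$-sufficient reason for $\mathbf{x}$ under $\mathcal{M}$ that is not minimal, then there is $i\in\{1,\dots,n\}$ with $\mathbf{y}[i]\neq\bot$ such that the partial instance $\mathbf{y}\setminus\{i\}$ (equal to $\mathbf{y}$ except that its $i$-th component is $\bot$) is also a $\delta$-sufficient reason for $\mathbf{x}$ under $\mathcal{M}$.
   Context: A model of dimension $n$ is a Boolean function $\mathcal{M}:\{0,1\}^n\to\{0,1\}$; it is monotone if $\mathbf{x}[i]\le\mathbf{z}[i]$ for all $i$ implies $\mathcal{M}(\mathbf{x})\le\mathcal{M}(\mathbf{z})$. Partial instances are $\mathbf{y}\in\{0,1,\bot\}^n$; $\mathbf{y}\subseteq\mathbf{x}$ iff $\mathbf{y}[i]=\mathbf{x}[i]$ whenever $\mathbf{y}[i]\ne\bot$; $\mathrm{Comp}(\mathbf{y})=\{\mathbf{z}\in\{0,1\}^n:\mathbf{y}\subseteq\mathbf{z}\}$; $|\mathbf{y}|_\bot$ is the number of $\bot$ entries. A $\delta$-sufficient reason for $\mathbf{x}$ under $\mathcal{M}$ is $\mathbf{y}\subseteq\mathbf{x}$ with $|\{\mathbf{z}\in\mathrm{Comp}(\mathbf{y}):\mathcal{M}(\mathbf{z})=\mathcal{M}(\mathbf{x})\}|\ge\delta2^{|\mathbf{y}|_\bot}$; it is minimal if there is no $\delta$-sufficient reason $\mathbf{y}'$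 for $\mathbf{x}$ under $\mathcal{M}$ with $\mathbf{y}'\subseteq\mathbf{y}$, $\mathbf{y}'\neq\mathbf{y}$. *)

From mathcomp Require Import all_boot all_order all_algebra.
Set Implicit Arguments. Unset Strict Implicit. Unset Printing Implicit Defensive.
Import Order.TTheory GRing.Theory Num.Theory.
Local Open Scope ring_scope.

(* Instances of dimension n: {ffun 'I_n -> bool}.  Partial instances:
   {ffun 'I_n -> option bool}, where None plays the role of bot. *)
Definition inst (n : nat) := {ffun 'I_n -> bool}.
Definition pinst (n : nat) := {ffun 'I_n -> option bool}.
Definition model (n : nat) := inst n -> bool.

Definition monotone n (M : model n) : Prop :=
  forall x z : inst n, (forall i, x i <= z i)%N -> (M x <= M z)%N.

Definition subsumes n (y : pinst n) (x : inst n) : bool :=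
  [forall i, if y i is Some b then b == x i else true].

Definition psubsumes n (y' y : pinst n) : bool :=
  [forall i, if y' i is Some b then y i == Some b else true].

Definition nbot n (y : pinst n) : nat := #|[set i | y i == None]|.

Definition good_count n (M : model n) (x : inst n) (y : pinst n) : nat :=
  #|[set z : inst n | subsumes y z & M z == M x]|.

Definition delta_suff (R : realFieldType) n (M : model n) (x : inst n)
  (delta : R) (y : pinst n) : Prop :=
  subsumes y x /\ (good_count M x y)%:R >= delta * 2%:R ^+ nbot y.

Definition minimal_delta_suff (R : realFieldType) n (M : model n) (x : inst n)
  (delta : R) (y : pinst n) : Prop :=
  delta_suff M x delta y /\
  ~ (exists y' : pinst n, psubsumes y' y /\ y' <> y /\ delta_suff M x delta y').

Definition remove_feat n (y : pinst n) (i : 'I_n) : pinst n :=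
  [ffun j => if j == i then None else y j].

From mathcomp Require Import all_boot all_order all_algebra.
From mathcomp Require Import zify.
From Stdlib Require Import Classical.
Import Order.TTheory GRing.Theory Num.Theory.
Set Implicit Arguments. Unset Strict Implicit. Unset Printing Implicit Defensive.

(* By monotonicity, among the completions of y with a free feature j those
   with z j = M x are at least as often good as those with z j = ~~ M x.
   Hence freeing a feature fixed to ~~ M x at least doubles the good count,
   while freeing one fixed to M x at most doubles it.  If y' is a strictly
   smaller delta-sufficient reason, the features freed in y' either contain
   one set to ~~ M x, which can be freed from y alone, or are all set to M x;
   then freeing any one of them from y loses no more than freeing all of
   them does. *)

Section Removal.
Variables (n : nat) (M : model n) (x : inst n).

Definition upd (T : Type) (f : {ffun 'I_n -> T}) (j : 'I_n) (a : T) :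
  {ffun 'I_n -> T} := [ffun k => if k == j then a else f k].

Definition remove_feats (v : pinst n) (S : {set 'I_n}) : pinst n :=
  [ffun j => if j \in S then None else v j].

Lemma remove_feats0 (v : pinst n) : remove_feats v set0 = v.
Proof. by apply/ffunP => j; rewrite ffunE inE. Qed.

Lemma upd_id (T : eqType) (f : {ffun 'I_n -> T}) j : upd f j (f j) = f.
Proof. by apply/ffunP => k; rewrite ffunE; case: eqP => [->|]. Qed.

Lemma subsumes_upd_Some (v : pinst n) j b (z : inst n) :
  subsumes (upd v j (Some b)) z = subsumes (remove_feat v j) z && (z j == b).
Proof.
apply/forallP/andP => [H|[/forallP H1 /eqP <-] k].
- split; last by have := H j; rewrite ffunE eqxx eq_sym.
  by apply/forallP => k; have := H k; rewrite !ffunE; case: eqP.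
- have := H1 k; rewrite !ffunE; by case: eqP => [->|].
Qed.

Lemma subsumes_remove_feat (v : pinst n) j (z : inst n) :
  subsumes v z -> subsumes (remove_feat v j) z.
Proof.
move=> /forallP Hv; apply/forallP => k; rewrite ffunE.
by case: eqP => // _; apply: Hv.
Qed.

Lemma good_count_remove_feat (v : pinst n) j :
  good_count M x (remove_feat v j) =
  (good_count M x (upd v j (Some true)) + good_count M x (upd v j (Some false)))%N.
Proof.
rewrite /good_count -(cardsID [set z : inst n | z j]).
congr (_ + _); apply: eq_card => z; rewrite !inE !subsumes_upd_Some;
  by case: (z j); rewrite ?andbT ?andbF.
Qed.

Lemma monotone_upd (z : inst n) j b : monotone M -> M z = b -> M (upd z j b) = b.
Proof.
move=> Mm <-; case Mz: (M z).
- have : (M z <= M (upd z j true))%N.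
    by apply: Mm => k; rewrite ffunE; case: eqP => //; case: (z k).
  by rewrite Mz; case: (M _).
- have : (M (upd z j false) <= M z)%N.
    by apply: Mm => k; rewrite ffunE; case: eqP => //; case: (z k).
  by rewrite Mz; case: (M _).
Qed.

Lemma good_count_upd_mono (v : pinst n) j : monotone M ->
  (good_count M x (upd v j (Some (~~ M x))) <= good_count M x (upd v j (Some (M x))))%N.
Proof.
move=> Mm; rewrite /good_count.
set A := [set z | _ & _].
have f_inj : {in A &, injective (fun z : inst n => upd z j (M x))}.
  move=> z1 z2; rewrite !inE !subsumes_upd_Some.
  move=> /andP[/andP[_ /eqP h1] _] /andP[/andP[_ /eqP h2] _] e.
  apply/ffunP => k; have := congr1 (fun g : inst n => g k) e; rewrite !ffunE.
  by case: eqP => [-> _|//]; rewrite h1 h2.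
rewrite -(card_in_imset f_inj); apply/subset_leq_card/subsetP => w /imsetP[z + ->].
rewrite !inE subsumes_upd_Some => /andP[/andP[Hs _] /eqP Mz].
rewrite subsumes_upd_Some monotone_upd // ffunE !eqxx !andbT.
apply/forallP => k; move/forallP: Hs => /(_ k); rewrite !ffunE.
by case: eqP.
Qed.

Lemma good_count_remove_feat_le (v : pinst n) j :
  monotone M -> v j = Some (M x) ->
  (good_count M x (remove_feat v j) <= 2 * good_count M x v)%N.
Proof.
move=> Mm vj; have := good_count_upd_mono v j Mm.
rewrite good_count_remove_feat -vj upd_id.
by case: (M x) vj => vj /=; rewrite -vj upd_id; lia.
Qed.

Lemma good_count_remove_feat_ge (v : pinst n) j :
  monotone M -> v j = Some (~~ M x) ->
  (2 * good_count M x v <= good_count M x (remove_feat v j))%N.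
Proof.
move=> Mm vj; have := good_count_upd_mono v j Mm.
rewrite good_count_remove_feat -vj upd_id.
by case: (M x) vj => vj /=; rewrite -vj upd_id; lia.
Qed.

Lemma remove_feats_setD1 (v : pinst n) (S : {set 'I_n}) j : j \in S ->
  remove_feats v S = remove_feats (remove_feat v j) (S :\ j).
Proof.
move=> jS; apply/ffunP => k; rewrite !ffunE in_setD1.
by case: eqP => [->|]; rewrite ?jS.
Qed.

Lemma good_count_remove_feats_le (v : pinst n) (S : {set 'I_n}) : monotone M ->
  (forall j, j \in S -> v j = Some (M x)) ->
  (good_count M x (remove_feats v S) <= 2 ^ #|S| * good_count M x v)%N.
Proof.
move=> Mm; move Hk: #|S| => k; elim: k v S Hk => [|k IH] v S Hk HS.
  by rewrite (cards0_eq Hk) remove_feats0 mul1n.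
have [j jS] : exists j, j \in S by apply/set0Pn; rewrite -card_gt0 Hk.
have HS' : forall i, i \in S :\ j -> remove_feat v j i = Some (M x).
  by move=> i; rewrite in_setD1 ffunE => /andP[/negbTE -> /HS].
rewrite (remove_feats_setD1 v jS).
apply: leq_trans (IH _ _ _ HS') _.
  by have := cardsD1 j S; rewrite jS Hk add1n => -[].
by rewrite expnS -mulnA mulnCA leq_mul2l good_count_remove_feat_le ?HS ?orbT.
Qed.

Lemma nbot_remove_feats (v : pinst n) (S : {set 'I_n}) :
  (forall j, j \in S -> v j != None) -> nbot (remove_feats v S) = (nbot v + #|S|)%N.
Proof.
move=> HS; rewrite /nbot addnC.
have -> : [set i | remove_feats v S i == None] = S :|: [set i | v i == None].
  by apply/setP => i; rewrite !inE ffunE; case: (i \in S).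
rewrite cardsU (_ : S :&: _ = set0) ?cards0 ?subn0 //.
by apply/setP => i; rewrite !inE; case: (boolP (i \in S)) => //= /HS /negbTE.
Qed.

Lemma nbot_remove_feat (v : pinst n) j :
  v j != None -> nbot (remove_feat v j) = (nbot v).+1.
Proof.
move=> vj; rewrite -addn1 -(cards1 j) -nbot_remove_feats => [|i]; last first.
  by rewrite inE => /eqP ->.
by congr nbot; apply/ffunP => k; rewrite !ffunE inE.
Qed.

Lemma remove_feats_psubsumes (y' y : pinst n) : psubsumes y' y ->
  remove_feats y [set k | y k != y' k] = y'.
Proof.
move=> /forallP Hy; apply/ffunP => k; rewrite ffunE inE.
have := Hy k; case: (y' k) => [b /eqP ->|_]; first by rewrite eqxx.
by case: eqP.
Qed.

Lemma psubsumes_neq_Some (y' y : pinst n) (z : inst n) k :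
  psubsumes y' y -> subsumes y z -> y k != y' k -> y k = Some (z k).
Proof.
move=> /forallP/(_ k) + /forallP/(_ k).
case: (y' k) => [b /eqP -> _|_]; first by rewrite eqxx.
by case: (y k) => // b /eqP ->.
Qed.

End Removal.

Local Open Scope ring_scope.

Lemma delta_suff_of_le_ratio (R : realFieldType) n (M : model n) (x : inst n)
  (delta : R) (w v : pinst n) :
  delta_suff M x delta w -> subsumes v x ->
  (good_count M x w * 2 ^ nbot v <= good_count M x v * 2 ^ nbot w)%N ->
  delta_suff M x delta v.
Proof.
move=> [_ Hw] vx Hle; split => //.
have pos : 0 < 2%:R ^+ nbot w :> R by rewrite exprn_gt0.
rewrite -(ler_pM2r pos) mulrAC (le_trans (ler_wpM2r _ Hw)) ?exprn_ge0 //.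
by rewrite -!natrX -!natrM ler_nat.
Qed.

Theorem lemma1 (R : realFieldType) (n : nat) (M : model n) (x : inst n)
  (delta : R) (y : pinst n) :
  monotone M -> 0 < delta -> delta <= 1 ->
  delta_suff M x delta y -> ~ minimal_delta_suff M x delta y ->
  exists i : 'I_n, y i <> None /\ delta_suff M x delta (remove_feat y i).
Proof.
move=> Mm _ _ Hy Hnm.
have [y' [y'y [y'_ne Hy']]] :
    exists y', psubsumes y' y /\ y' <> y /\ delta_suff M x delta y'.
  by apply: NNPP => H; apply: Hnm.
set S := [set k | y k != y' k].
have y'S : remove_feats y S = y' by apply: remove_feats_psubsumes.
have yS : forall k, k \in S -> y k = Some (x k).
  by move=> k; rewrite inE; apply: psubsumes_neq_Some y'y Hy.1.
have yS_ne : forall k, k \in S -> y k != None by move=> k /yS ->.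
case: (pickP [pred k in S | x k != M x]) => [i /andP[iS xi] | Sx].
  exists i; split; first exact/eqP/yS_ne.
  apply: delta_suff_of_le_ratio Hy (subsumes_remove_feat _ Hy.1) _.
  rewrite nbot_remove_feat ?yS_ne // expnS mulnA leq_mul2r [(_ * 2)%N]mulnC.
  by rewrite good_count_remove_feat_ge ?orbT // yS //; case: (x i) xi; case: (M x).
have [k kS] : exists k, k \in S.
  by apply/set0Pn/eqP => S0; apply: y'_ne; rewrite -y'S S0 remove_feats0.
exists k; split; first exact/eqP/yS_ne.
have Sk : forall j, j \in S :\ k -> remove_feat y k j = Some (M x).
  move=> j; rewrite in_setD1 ffunE => /andP[/negbTE -> jS].
  by rewrite yS //; have := Sx j; rewrite /= jS => /negbFE /eqP ->.
apply: delta_suff_of_le_ratio Hy' (subsumes_remove_feat _ Hy.1) _.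
rewrite -y'S (remove_feats_setD1 _ kS) nbot_remove_feats => [|j /Sk ->//].
rewrite expnD mulnA mulnAC leq_mul2r [X in (_ <= X)%N]mulnC.
by rewrite good_count_remove_feats_le ?orbT.
Qed.
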